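(* Let $0\le k<n$ and let $\Phi:\mathfrak{B}([n])^{op}\to\mathbf{Gpd}$ be a contravariant functor. Consider the forgetful (restriction) functor $\gamma_k:\operatorname{2lim}_{\mathfrak{B}([n])}\Phi\to\operatorname{2lim}_{\mathfrak{B}([n],k)}\Phi$. Then: (i) $\gamma_k$ is faithful; (ii) if $k\le n-2$, $\gamma_k$ is full and faithful; (iii) if $k\le n-3$, $\gamma_k$ is an equivalence of categories.
   Context: $[n]=\{1,\dots,n\}$; $\mathfrak{B}([n])$ is the poset of proper subsets of $[n]$ ordered by inclusion, and $\mathfrak{B}([n],k)$ is the subposet of proper subsets $S\subsetneq[n]$ with $|S|\ge k$; $\Phi$ on $\mathfrak{B}([n],k)$ denotes the restriction. For $U\subseteq V$, $\Phi_{U,V}:\Phi(V)\to\Phi(U)$. For a functor $\Psi:I^{op}\to\mathbf{Gpd}$ on a poset, the 2-limit $\operatorname{2lim}\Psi$ is the groupoid whose objects are families $(a_U,\alpha_{U,V})$ with $a_U\in\Psi(U)$ and isomorphisms $\alpha_{U,V}:\Psi_{U,V}(a_V)\to a_U$ for $U\le V$ satisfying $\alpha_{U,U}=\mathrm{id}$ and $\alpha_{U,W}=\alpha_{U,V}\circ\Psi_{U,V}(\alpha_{V,W})$ for $U\le V\le W$, and whose morphisms are families $g_U:a_U\to b_U$ with $g_U\circ\alpha_{U,V}=\beta_{U,V}\circ\Psi_{U,V}(g_V)$. *)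

From Stdlib Require Import FunctionalExtensionality ProofIrrelevance.
From mathcomp Require Import all_boot.
Set Implicit Arguments. Unset Strict Implicit. Unset Printing Implicit Defensive.

Record Cat := {
  cobj :> Type;
  chom : cobj -> cobj -> Type;
  cid : forall x, chom x x;
  ccomp : forall x y z, chom y z -> chom x y -> chom x z;
  ccompA : forall x y z w (h : chom z w) (g : chom y z) (f : chom x y),
     ccomp h (ccomp g f) = ccomp (ccomp h g) f;
  ccomp1l : forall x y (f : chom x y), ccomp (cid y) f = f;
  ccomp1r : forall x y (f : chom x y), ccomp f (cid x) = f }.
Arguments chom {c}. Arguments cid {c}. Arguments ccomp {c x y z}.

Definition is_iso (C : Cat) (x y : C) (f : chom x y) : Prop :=
  exists g : chom y x, ccomp g f = cid x /\ ccomp f g = cid y.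

Record Gpd := { gcat :> Cat; gisoP : forall (x y : gcat) (f : chom x y), is_iso f }.

Record Functor (C D : Cat) := {
  fobj :> C -> D;
  fmap : forall x y, chom x y -> chom (fobj x) (fobj y);
  fmap_id : forall x, fmap (cid x) = cid (fobj x);
  fmap_comp : forall x y z (g : chom y z) (f : chom x y),
     fmap (ccomp g f) = ccomp (fmap g) (fmap f) }.
Arguments fmap {C D} _ {x y}.

Definition faithful (C D : Cat) (F : Functor C D) : Prop :=
  forall (x y : C) (f g : chom x y), fmap F f = fmap F g -> f = g.

Definition full (C D : Cat) (F : Functor C D) : Prop :=
  forall (x y : C) (h : chom (F x) (F y)), exists f : chom x y, fmap F f = h.

Definition equivalence (C D : Cat) (F : Functor C D) : Prop :=
  exists G : Functor D C,
    (exists eta : forall x : C, chom x (G (F x)),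
        (forall x, is_iso (eta x)) /\
        (forall x y (f : chom x y), ccomp (eta y) f = ccomp (fmap G (fmap F f)) (eta x)))
    /\
    (exists eps : forall y : D, chom (F (G y)) y,
        (forall y, is_iso (eps y)) /\
        (forall x y (f : chom x y), ccomp (eps y) (fmap F (fmap G f)) = ccomp f (eps x))).

Definition hcast (C : Cat) (x x' y y' : C) (ex : x = x') (ey : y = y')
  (f : chom x y) : chom x' y' :=
  match ex in _ = x1 return chom x1 y' with
  | erefl => match ey in _ = y1 return chom x y1 with erefl => f end end.

(* ---------- strict functors Phi : B([n])^op -> Gpd ----------
   B([n]) = proper subsets of [n] = 'I_n.  Phi is given on all subsets, but
   the functor axioms are only imposed on proper subsets, and the 2-limits
   below only look at proper subsets, so the values at [set: 'I_n] are
   irrelevant. pres h : Phi V -> Phi U for h : U \subset V is Phi_{U,V}. *)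
Record PFun (n : nat) := {
  pobj : {set 'I_n} -> Gpd;
  pres : forall U V : {set 'I_n}, U \subset V -> Functor (pobj V) (pobj U);
  pres_id_obj : forall (U : {set 'I_n}) (h : U \subset U), U \proper [set: 'I_n] ->
     forall a : pobj U, pres h a = a;
  pres_id_hom : forall (U : {set 'I_n}) (h : U \subset U) (pU : U \proper [set: 'I_n])
     (a b : pobj U) (f : chom a b),
     fmap (pres h) f = hcast (esym (pres_id_obj h pU a)) (esym (pres_id_obj h pU b)) f;
  pres_comp_obj : forall (U V W : {set 'I_n}) (hUV : U \subset V) (hVW : V \subset W) (hUW : U \subset W),
     W \proper [set: 'I_n] -> forall a : pobj W, pres hUV (pres hVW a) = pres hUW a;
  pres_comp_hom : forall (U V W : {set 'I_n}) (hUV : U \subset V) (hVW : V \subset W) (hUW : U \subset W)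
     (pW : W \proper [set: 'I_n]) (a b : pobj W) (f : chom a b),
     fmap (pres hUV) (fmap (pres hVW) f) =
     hcast (esym (pres_comp_obj hUV hVW hUW pW a)) (esym (pres_comp_obj hUV hVW hUW pW b))
           (fmap (pres hUW) f) }.

(* B([n],k): proper subsets with at least k elements; B([n]) = B([n],0) *)
Definition Bpred (n k : nat) (U : {set 'I_n}) : bool :=
  (U \proper [set: 'I_n]) && (k <= #|U|).

Lemma Bpred_proper n k (U : {set 'I_n}) : Bpred k U -> U \proper [set: 'I_n].
Proof. by case/andP. Qed.

Lemma Bpred_k0 n k (U : {set 'I_n}) : Bpred k U -> Bpred 0 U.
Proof. by rewrite /Bpred; case/andP=> -> _. Qed.

Section Lim.
Variables (n k : nat) (Phi : PFun n).

Record LObj := {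
  la : forall U, Bpred k U -> pobj Phi U;
  lal : forall U V (pU : Bpred k U) (pV : Bpred k V) (h : U \subset V),
     chom (pres Phi h (la pV)) (la pU);
  lal_id : forall U (pU : Bpred k U) (h : U \subset U),
     lal pU pU h = hcast (esym (pres_id_obj h (Bpred_proper pU) (la pU))) erefl (cid (la pU));
  lal_comp : forall U V W (pU : Bpred k U) (pV : Bpred k V) (pW : Bpred k W)
     (hUV : U \subset V) (hVW : V \subset W) (hUW : U \subset W),
     lal pU pW hUW =
     hcast (pres_comp_obj hUV hVW hUW (Bpred_proper pW) (la pW)) erefl
           (ccomp (lal pU pV hUV) (fmap (pres Phi hUV) (lal pV pW hVW))) }.

Record LHom (A B : LObj) := {
  lg : forall U (pU : Bpred k U), chom (la A pU) (la B pU);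
  lgP : forall U V (pU : Bpred k U) (pV : Bpred k V) (h : U \subset V),
     ccomp (lg pU) (lal A pU pV h) = ccomp (lal B pU pV h) (fmap (pres Phi h) (lg pV)) }.

Lemma LHom_eq A B (f g : LHom A B) :
  (forall U (pU : Bpred k U), lg f pU = lg g pU) -> f = g.
Proof.
case: f => f fP; case: g => g gP /= H.
have E : f = g.
  apply: functional_extensionality_dep => U.
  apply: functional_extensionality_dep => pU; exact: H.
subst g; f_equal; apply: proof_irrelevance.
Qed.

Definition LHom_id (A : LObj) : LHom A A.
Proof.
refine {| lg := fun U pU => cid (la A pU) |}.
by move=> U V pU pV h; rewrite fmap_id ccomp1l ccomp1r.
Defined.

Definition LHom_comp (A B C : LObj) (g : LHom B C) (f : LHom A B) : LHom A C.
Proof.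
refine {| lg := fun U pU => ccomp (lg g pU) (lg f pU) |}.
move=> U V pU pV h.
by rewrite -ccompA (lgP f) ccompA (lgP g) -ccompA -fmap_comp.
Defined.

Definition lim : Cat.
Proof.
refine {| cobj := LObj; chom := LHom; cid := LHom_id; ccomp := LHom_comp |}.
- by move=> *; apply: LHom_eq => U pU /=; rewrite ccompA.
- by move=> *; apply: LHom_eq => U pU /=; rewrite ccomp1l.
- by move=> *; apply: LHom_eq => U pU /=; rewrite ccomp1r.
Defined.

End Lim.

Section Gamma.
Variables (n k : nat) (Phi : PFun n).

Definition gamma_obj (A : lim 0 Phi) : lim k Phi.
Proof.
refine {| la := fun U pU => la A (Bpred_k0 pU);
          lal := fun U V pU pV h => lal A (Bpred_k0 pU) (Bpred_k0 pV) h |}.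
- move=> U pU h; rewrite (lal_id A).
  by rewrite (eq_irrelevance (Bpred_proper (Bpred_k0 pU)) (Bpred_proper pU)).
- move=> U V W pU pV pW hUV hVW hUW; rewrite (lal_comp A _ (Bpred_k0 pV) _ hUV hVW).
  by rewrite (eq_irrelevance (Bpred_proper (Bpred_k0 pW)) (Bpred_proper pW)).
Defined.

Definition gamma_hom (A B : lim 0 Phi) (f : chom A B) : chom (gamma_obj A) (gamma_obj B).
Proof.
refine {| lg := fun U pU => lg f (Bpred_k0 pU) : chom (la (gamma_obj A) pU) (la (gamma_obj B) pU) |}.
by move=> U V pU pV h; exact: (lgP f).
Defined.

Definition gamma : Functor (lim 0 Phi) (lim k Phi).
Proof.
refine {| fobj := gamma_obj; fmap := gamma_hom |}.
- by move=> A; apply: LHom_eq.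
- by move=> A B C g f; apply: LHom_eq.
Defined.

End Gamma.

(* gamma_0 is isomorphic to the identity and gamma_{j+1} is isomorphic to
   restr_j o gamma_j, where restr_j : 2lim_{B([n],j)} -> 2lim_{B([n],j+1)} forgets
   the components at the sets of size exactly j.  Since all three properties are
   stable under composition and natural isomorphism, and a fully faithful
   essentially surjective functor is an equivalence, it suffices to prove that
   restr_j is faithful if j+2 <= n, full if j+3 <= n and essentially surjective
   if j+4 <= n.  For |U| = j, an object B of 2lim_{B([n],j+1)} restricts to a
   diagram X |-> Phi_{U,X}(B_X) in the groupoid Phi(U), indexed by the poset
   Upper(U) of sets of B([n],j+1) containing U.  This poset is nonempty when
   j+2 <= n and connected when j+3 <= n (x+U and y+U lie below x+y+U); when
   j+4 <= n the "swap" isomorphisms between one-point extensions satisfy a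
   cocycle identity (any three points fit in a proper set), so the diagram has a
   coherent trivialization.  These three facts give, respectively, uniqueness
   and existence of the missing morphism components and existence of the
   missing object components at U. *)

From Stdlib Require Import FunctionalExtensionality ProofIrrelevance ClassicalEpsilon.
From mathcomp Require Import all_boot zify.
Set Implicit Arguments. Unset Strict Implicit. Unset Printing Implicit Defensive.

(* Dependent
   equalities between objects of Phi(U) are unavoidable in a strict setting;
   these morphisms let us rewrite them away as ordinary compositions. *)
Definition eq_hom (C : Cat) (x y : C) (e : x = y) : chom x y :=
  match e in _ = y0 return chom x y0 with erefl => cid x end.

Lemma eq_hom_irr (C : Cat) (x y : C) (e e' : x = y) : eq_hom e = eq_hom e'.
Proof. by rewrite (proof_irrelevance _ e e'). Qed.

Lemma eq_hom_refl (C : Cat) (x : C) (e : x = x) : eq_hom e = cid x.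
Proof. by rewrite (proof_irrelevance _ e erefl). Qed.

Lemma eq_hom_trans (C : Cat) (x y z : C) (e1 : x = y) (e2 : y = z) :
  ccomp (eq_hom e2) (eq_hom e1) = eq_hom (etrans e1 e2).
Proof. by case: _ / e2; case: _ / e1 => /=; rewrite ccomp1l. Qed.

Lemma eq_hom_transA (C : Cat) (w x y z : C) (e1 : x = y) (e2 : y = z) (f : chom w x) :
  ccomp (eq_hom e2) (ccomp (eq_hom e1) f) = ccomp (eq_hom (etrans e1 e2)) f.
Proof. by rewrite ccompA eq_hom_trans. Qed.

Lemma fmap_eq_hom (C D : Cat) (F : Functor C D) (x y : C) (e : x = y) :
  fmap F (eq_hom e) = eq_hom (f_equal F e).
Proof. by case: _ / e => /=; rewrite fmap_id. Qed.

Lemma hcast_eq_hom (C : Cat) (x x' y y' : C) (ex : x = x') (ey : y = y') (f : chom x y) :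
  hcast ex ey f = ccomp (eq_hom ey) (ccomp f (eq_hom (esym ex))).
Proof. by case: _ / ex; case: _ / ey => /=; rewrite ccomp1r ccomp1l. Qed.

Ltac simpl_comp := repeat (rewrite ?ccomp1l ?ccomp1r ?fmap_id ?fmap_comp ?fmap_eq_hom
                                   -?ccompA ?eq_hom_transA ?eq_hom_trans).

Ltac close_eq_hom := repeat (apply: eq_hom_irr || (rewrite eq_hom_refl ?ccomp1r ?ccomp1l)
                             || congr ccomp).

Definition iso_inv (C : Cat) (x y : C) (f : chom x y) (H : is_iso f) : chom y x :=
  proj1_sig (constructive_indefinite_description _ H).

Lemma iso_invL (C : Cat) (x y : C) (f : chom x y) (H : is_iso f) :
  ccomp (iso_inv H) f = cid x.
Proof. by rewrite /iso_inv; case: constructive_indefinite_description => g []. Qed.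

Lemma iso_invR (C : Cat) (x y : C) (f : chom x y) (H : is_iso f) :
  ccomp f (iso_inv H) = cid y.
Proof. by rewrite /iso_inv; case: constructive_indefinite_description => g []. Qed.

Lemma iso_cancelr (C : Cat) (x y z : C) (i : chom x y) (a b : chom y z) :
  is_iso i -> ccomp a i = ccomp b i -> a = b.
Proof. by case=> j [_ ij] E; rewrite -(ccomp1r a) -(ccomp1r b) -ij !ccompA E. Qed.

Lemma iso_cancell (C : Cat) (x y z : C) (i : chom y z) (a b : chom x y) :
  is_iso i -> ccomp i a = ccomp i b -> a = b.
Proof. by case=> j [ji _] E; rewrite -(ccomp1l a) -(ccomp1l b) -ji -!ccompA E. Qed.

Lemma iso_comp (C : Cat) (x y z : C) (g : chom y z) (f : chom x y) :
  is_iso g -> is_iso f -> is_iso (ccomp g f).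
Proof.
case=> g' [g'g gg'] [f' [f'f ff']]; exists (ccomp f' g'); split.
- by rewrite -ccompA (ccompA g') g'g ccomp1l.
- by rewrite -ccompA (ccompA f) ff' ccomp1l.
Qed.

Lemma iso_inv_iso (C : Cat) (x y : C) (f : chom x y) (H : is_iso f) : is_iso (iso_inv H).
Proof. by exists f; rewrite iso_invL iso_invR. Qed.

Lemma fmap_iso (C D : Cat) (F : Functor C D) (x y : C) (f : chom x y) :
  is_iso f -> is_iso (fmap F f).
Proof. by case=> g [gf fg]; exists (fmap F g); rewrite -!fmap_comp gf fg !fmap_id. Qed.

Lemma iso_inv_uniq (C : Cat) (x y : C) (f : chom x y) (g : chom y x) (H : is_iso f) :
  ccomp g f = cid x -> g = iso_inv H.
Proof. by move=> gf; apply: (@iso_cancelr _ _ _ _ f) => //; rewrite gf iso_invL. Qed.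

Lemma iso_inv_comp (C : Cat) (x y z : C) (g : chom y z) (f : chom x y)
  (Hg : is_iso g) (Hf : is_iso f) (H : is_iso (ccomp g f)) :
  iso_inv H = ccomp (iso_inv Hf) (iso_inv Hg).
Proof.
symmetry; apply: iso_inv_uniq.
by rewrite -ccompA (ccompA (iso_inv Hg)) iso_invL ccomp1l iso_invL.
Qed.

Definition gpd_inv (G : Gpd) (x y : G) (f : chom x y) : chom y x := iso_inv (gisoP f).

Lemma gpd_invL (G : Gpd) (x y : G) (f : chom x y) : ccomp (gpd_inv f) f = cid x.
Proof. exact: iso_invL. Qed.

Lemma gpd_invR (G : Gpd) (x y : G) (f : chom x y) : ccomp f (gpd_inv f) = cid y.
Proof. exact: iso_invR. Qed.

Lemma gpd_inv_comp (G : Gpd) (x y z : G) (g : chom y z) (f : chom x y) :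
  gpd_inv (ccomp g f) = ccomp (gpd_inv f) (gpd_inv g).
Proof. exact: iso_inv_comp. Qed.

Definition comp_functor (C D E : Cat) (G : Functor D E) (F : Functor C D) : Functor C E.
Proof.
refine {| fobj := fun x => G (F x); fmap := fun x y f => fmap G (fmap F f) |}.
- by move=> x; rewrite !fmap_id.
- by move=> x y z g f; rewrite !fmap_comp.
Defined.

Definition id_functor (C : Cat) : Functor C C.
Proof. by refine {| fobj := fun x => x; fmap := fun x y f => f |}. Defined.

Definition nat_iso (C D : Cat) (F G : Functor C D) : Prop :=
  exists th : forall x, chom (F x) (G x),
    (forall x, is_iso (th x)) /\
    (forall x y (f : chom x y), ccomp (th y) (fmap F f) = ccomp (fmap G f) (th x)).

Definition ess_surj (C D : Cat) (F : Functor C D) : Prop :=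
  forall y : D, exists x : C, exists i : chom (F x) y, is_iso i.

Lemma id_functor_props (C : Cat) :
  [/\ faithful (id_functor C), full (id_functor C) & ess_surj (id_functor C)].
Proof.
split=> [x y f g //|x y h|y]; first by exists h.
by exists y, (cid y), (cid y); rewrite ccomp1l.
Qed.

Lemma faithful_comp (C D E : Cat) (G : Functor D E) (F : Functor C D) :
  faithful F -> faithful G -> faithful (comp_functor G F).
Proof. by move=> HF HG x y f g /= /HG /HF. Qed.

Lemma full_comp (C D E : Cat) (G : Functor D E) (F : Functor C D) :
  full F -> full G -> full (comp_functor G F).
Proof.
move=> HF HG x y h /=; have [g <-] := HG _ _ h; have [f <-] := HF _ _ g.
by exists f.
Qed.

Lemma ess_surj_comp (C D E : Cat) (G : Functor D E) (F : Functor C D) :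
  ess_surj F -> ess_surj G -> ess_surj (comp_functor G F).
Proof.
move=> HF HG z; have [y [i Hi]] := HG z; have [x [j Hj]] := HF y.
by exists x, (ccomp i (fmap G j)); apply: iso_comp => //; exact: fmap_iso.
Qed.

Lemma nat_iso_faithful (C D : Cat) (F G : Functor C D) :
  nat_iso F G -> faithful F -> faithful G.
Proof.
case=> th [th_iso th_nat] HF x y f g E; apply: HF.
by apply: (@iso_cancell _ _ _ _ (th y)) => //; rewrite !th_nat E.
Qed.

Lemma nat_iso_full (C D : Cat) (F G : Functor C D) :
  nat_iso F G -> full F -> full G.
Proof.
case=> th [th_iso th_nat] HF x y h.
have [f Ef] := HF _ _ (ccomp (iso_inv (th_iso y)) (ccomp h (th x))).
exists f; apply: (@iso_cancelr _ _ _ _ (th x)) => //.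
by rewrite -th_nat Ef ccompA iso_invR ccomp1l.
Qed.

Lemma nat_iso_ess_surj (C D : Cat) (F G : Functor C D) :
  nat_iso F G -> ess_surj F -> ess_surj G.
Proof.
case=> th [th_iso _] HF y; have [x [i Hi]] := HF y.
by exists x, (ccomp i (iso_inv (th_iso x))); apply: iso_comp => //; exact: iso_inv_iso.
Qed.

Section FullyFaithfulEquivalence.
Variables (C D : Cat) (F : Functor C D).
Hypotheses (F_faithful : faithful F) (F_full : full F) (F_ess_surj : ess_surj F).

Definition inv_obj (y : D) : C :=
  proj1_sig (constructive_indefinite_description _ (F_ess_surj y)).

Definition counit_sig (y : D) := constructive_indefinite_description _
  (proj2_sig (constructive_indefinite_description _ (F_ess_surj y))).

Definition counit (y : D) : chom (F (inv_obj y)) y := proj1_sig (counit_sig y).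

Lemma counit_iso (y : D) : is_iso (counit y).
Proof. exact: (proj2_sig (counit_sig y)). Qed.

Definition counit_inv (y : D) : chom y (F (inv_obj y)) := iso_inv (counit_iso y).

Lemma counit_invL (y : D) : ccomp (counit_inv y) (counit y) = cid _.
Proof. exact: iso_invL. Qed.

Lemma counit_invR (y : D) : ccomp (counit y) (counit_inv y) = cid _.
Proof. exact: iso_invR. Qed.

Definition inv_map (y y' : D) (f : chom y y') : chom (inv_obj y) (inv_obj y') :=
  proj1_sig (constructive_indefinite_description _
     (F_full (ccomp (counit_inv y') (ccomp f (counit y))))).

Lemma inv_mapE (y y' : D) (f : chom y y') :
  fmap F (inv_map f) = ccomp (counit_inv y') (ccomp f (counit y)).
Proof. by rewrite /inv_map; case: constructive_indefinite_description. Qed.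

Definition inv_functor : Functor D C.
Proof.
refine {| fobj := inv_obj; fmap := inv_map |}.
- by move=> y; apply: F_faithful; rewrite inv_mapE fmap_id ccomp1l counit_invL.
- move=> x y z g f; apply: F_faithful; rewrite fmap_comp !inv_mapE.
  by rewrite -!ccompA (ccompA (counit y)) counit_invR ccomp1l.
Defined.

Definition unit_map (x : C) : chom x (inv_obj (F x)) :=
  proj1_sig (constructive_indefinite_description _ (F_full (counit_inv (F x)))).

Lemma unit_mapE (x : C) : fmap F (unit_map x) = counit_inv (F x).
Proof. by rewrite /unit_map; case: constructive_indefinite_description. Qed.

Lemma fully_faithful_ess_surj_equiv : equivalence F.
Proof.
exists inv_functor; split.
- exists unit_map; split.
  + move=> x; have [g Eg] := F_full (counit (F x)).
    exists g; split; apply: F_faithful;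
      by rewrite fmap_comp Eg unit_mapE ?counit_invL ?counit_invR !fmap_id.
  + move=> x y f; apply: F_faithful; rewrite !fmap_comp /= inv_mapE !unit_mapE.
    by rewrite -!ccompA counit_invR ccomp1r.
- exists counit; split; first exact: counit_iso.
  by move=> x y f /=; rewrite inv_mapE !ccompA counit_invR ccomp1l.
Qed.

End FullyFaithfulEquivalence.

Section Limits.
Variables (n : nat) (Phi : PFun n).

Lemma Bpred_succ j (U : {set 'I_n}) : Bpred j.+1 U -> Bpred j U.
Proof. by rewrite /Bpred => /andP [-> /ltnW]. Qed.

Lemma proper_of_card (A : {set 'I_n}) : #|A| < n -> A \proper [set: 'I_n].
Proof. by move=> An; rewrite properEcard subsetT cardsT card_ord. Qed.

Lemma pres_idE (U : {set 'I_n}) (h : U \subset U) (pU : U \proper [set: 'I_n])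
  (a b : pobj Phi U) (f : chom a b) :
  fmap (pres Phi h) f =
  ccomp (eq_hom (esym (pres_id_obj h pU b))) (ccomp f (eq_hom (pres_id_obj h pU a))).
Proof. by rewrite (pres_id_hom h pU) hcast_eq_hom esymK. Qed.

Lemma la_irr j (A : lim j Phi) U (p q : Bpred j U) : la A p = la A q.
Proof. by rewrite (eq_irrelevance p q). Qed.

Lemma lal_irr j (A : lim j Phi) U V (p1 p2 : Bpred j U) (q1 q2 : Bpred j V)
  (h : U \subset V) :
  lal A p2 q2 h =
  ccomp (eq_hom (la_irr A p1 p2))
        (ccomp (lal A p1 q1 h) (fmap (pres Phi h) (eq_hom (la_irr A q2 q1)))).
Proof.
rewrite (eq_irrelevance p2 p1) (eq_irrelevance q2 q1).
by rewrite !eq_hom_refl fmap_id ccomp1l ccomp1r.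
Qed.

Lemma lg_irr j (A B : lim j Phi) (f : chom A B) U (p1 p2 : Bpred j U) :
  ccomp (eq_hom (la_irr B p1 p2)) (lg f p1) = ccomp (lg f p2) (eq_hom (la_irr A p1 p2)).
Proof. by rewrite (eq_irrelevance p2 p1) !eq_hom_refl ccomp1l ccomp1r. Qed.

Lemma nat_at_refl j (A B : lim j Phi) U (p : Bpred j U) (h : U \subset U)
  (c : chom (la A p) (la B p)) :
  ccomp c (lal A p p h) = ccomp (lal B p p h) (fmap (pres Phi h) c).
Proof.
rewrite (lal_id A) (lal_id B) !hcast_eq_hom (pres_idE h (Bpred_proper p)); simpl_comp.
by rewrite eq_hom_refl ccomp1l; close_eq_hom.
Qed.

Definition lim_inv j (X Y : lim j Phi) (f : chom X Y) : chom Y X.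
Proof.
refine {| lg := fun U p => gpd_inv (lg f p) |}.
move=> U V pU pV h.
apply: (@iso_cancelr _ _ _ _ (fmap (pres Phi h) (lg f pV))).
  by apply: fmap_iso; apply: gisoP.
rewrite -!ccompA -(fmap_comp (pres Phi h)) gpd_invL fmap_id ccomp1r.
apply: (@iso_cancell _ _ _ _ (lg f pU)); first exact: gisoP.
by rewrite !ccompA gpd_invR ccomp1l (lgP f).
Defined.

Lemma lim_iso j (X Y : lim j Phi) (f : chom X Y) : is_iso f.
Proof.
by exists (lim_inv f); split; apply: LHom_eq => U p /=; [exact: gpd_invL|exact: gpd_invR].
Qed.

Definition lim_hom_of_eq j (X Y : lim j Phi) (E : forall U (p : Bpred j U), la X p = la Y p)
  (N : forall U V (p : Bpred j U) (q : Bpred j V) (h : U \subset V),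
     ccomp (eq_hom (E U p)) (lal X p q h) =
     ccomp (lal Y p q h) (fmap (pres Phi h) (eq_hom (E V q)))) :
  chom X Y := {| lg := fun U p => eq_hom (E U p); lgP := N |}.

Lemma lal_eq_hom j (A : lim j Phi) U V (p1 p2 : Bpred j U) (q1 q2 : Bpred j V)
  (h : U \subset V) :
  ccomp (eq_hom (la_irr A p1 p2)) (lal A p1 q1 h) =
  ccomp (lal A p2 q2 h) (fmap (pres Phi h) (eq_hom (la_irr A q1 q2))).
Proof. by rewrite (lal_irr A p1 p2 q1 q2); simpl_comp; close_eq_hom. Qed.

Section Restriction.
Variable j : nat.

Definition restr_obj (A : lim j Phi) : lim j.+1 Phi.
Proof.
refine {| la := fun U pU => la A (Bpred_succ pU);
          lal := fun U V pU pV h => lal A (Bpred_succ pU) (Bpred_succ pV) h |}.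
- move=> U pU h; rewrite (lal_id A).
  by rewrite (eq_irrelevance (Bpred_proper (Bpred_succ pU)) (Bpred_proper pU)).
- move=> U V W pU pV pW hUV hVW hUW; rewrite (lal_comp A _ (Bpred_succ pV) _ hUV hVW).
  by rewrite (eq_irrelevance (Bpred_proper (Bpred_succ pW)) (Bpred_proper pW)).
Defined.

Definition restr_hom (A B : lim j Phi) (f : chom A B) : chom (restr_obj A) (restr_obj B).
Proof.
refine {| lg := fun U pU =>
   lg f (Bpred_succ pU) : chom (la (restr_obj A) pU) (la (restr_obj B) pU) |}.
by move=> U V pU pV h; exact: (lgP f).
Defined.

Definition restr : Functor (lim j Phi) (lim j.+1 Phi).
Proof.
refine {| fobj := restr_obj; fmap := restr_hom |}.
- by move=> A; apply: LHom_eq.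
- by move=> A B C g f; apply: LHom_eq.
Defined.

End Restriction.

Lemma gamma0_iso_id : nat_iso (id_functor (lim 0 Phi)) (gamma 0 Phi).
Proof.
exists (fun A => @lim_hom_of_eq 0 A (gamma 0 Phi A) (fun U p => la_irr A p (Bpred_k0 p))
   (fun U V p q h => lal_eq_hom A p (Bpred_k0 p) q (Bpred_k0 q) h)).
split=> [A|A B f]; first exact: lim_iso.
by apply: LHom_eq => U p /=; exact: lg_irr.
Qed.

Lemma gamma_succ_iso k :
  nat_iso (comp_functor (restr k) (gamma k Phi)) (gamma k.+1 Phi).
Proof.
exists (fun A => @lim_hom_of_eq k.+1 (restr k (gamma k Phi A)) (gamma k.+1 Phi A)
   (fun U p => la_irr A (Bpred_k0 (Bpred_succ p)) (Bpred_k0 p))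
   (fun U V p q h => lal_eq_hom A (Bpred_k0 (Bpred_succ p)) (Bpred_k0 p)
        (Bpred_k0 (Bpred_succ q)) (Bpred_k0 q) h)).
split=> [A|A B f]; first exact: lim_iso.
by apply: LHom_eq => U p /=; exact: lg_irr.
Qed.

End Limits.

Section UpperDiagram.
Variables (n : nat) (Phi : PFun n) (J : nat) (B : lim J Phi) (U : {set 'I_n}).

Definition above (X : {set 'I_n}) : bool := (U \subset X) && Bpred J X.
Definition Upper := {X : {set 'I_n} | above X}.
Definition uset (X : Upper) : {set 'I_n} := proj1_sig X.

Lemma upper_sub (X : Upper) : U \subset uset X.
Proof. by case: X => X /= /andP []. Qed.

Lemma upper_B (X : Upper) : Bpred J (uset X).
Proof. by case: X => X /= /andP []. Qed.

Lemma Upper_eq (X Y : Upper) : uset X = uset Y -> X = Y.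
Proof. by case: X Y => [X pX] [Y pY] /= E; subst Y; rewrite (eq_irrelevance pX pY). Qed.

Definition upper_obj (X : Upper) : pobj Phi U := pres Phi (upper_sub X) (la B (upper_B X)).

Lemma upper_objE (X Y : Upper) (h : uset X \subset uset Y) :
  upper_obj Y = pres Phi (upper_sub X) (pres Phi h (la B (upper_B Y))).
Proof.
by rewrite /upper_obj (pres_comp_obj (upper_sub X) h (upper_sub Y) (Bpred_proper (upper_B Y))).
Qed.

(* Locked so that the normalization tactics do not unfold it. *)
Fact upper_map_key : unit. Proof. by []. Qed.
Definition upper_map_def (X Y : Upper) (h : uset X \subset uset Y) :
  chom (upper_obj Y) (upper_obj X) :=
  ccomp (fmap (pres Phi (upper_sub X)) (lal B (upper_B X) (upper_B Y) h)) (eq_hom (upper_objE h)).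
Definition upper_map (X Y : Upper) (h : uset X \subset uset Y) :
  chom (upper_obj Y) (upper_obj X) := locked_with upper_map_key (upper_map_def h).

Lemma upper_map_irr (X Y : Upper) (h h' : uset X \subset uset Y) : upper_map h = upper_map h'.
Proof. by rewrite (eq_irrelevance h h'). Qed.

Lemma upper_map_id (X : Upper) (h : uset X \subset uset X) : upper_map h = cid (upper_obj X).
Proof.
by rewrite /upper_map unlock /upper_map_def (lal_id B) hcast_eq_hom; simpl_comp; exact: eq_hom_refl.
Qed.

Lemma upper_map_comp (X Y Z : Upper) (hXY : uset X \subset uset Y)
  (hYZ : uset Y \subset uset Z) (hXZ : uset X \subset uset Z) :
  ccomp (upper_map hXY) (upper_map hYZ) = upper_map hXZ.
Proof.
rewrite /upper_map !unlock /upper_map_def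
        (lal_comp B (upper_B X) (upper_B Y) (upper_B Z) hXY hYZ hXZ) hcast_eq_hom; simpl_comp.
rewrite (pres_comp_hom (upper_sub X) hXY (upper_sub Y) (Bpred_proper (upper_B Y)))
        hcast_eq_hom; simpl_comp.
by close_eq_hom.
Qed.

Section SelfIndexed.
Hypothesis hU : Bpred J U.

Definition upper_self : Upper := exist _ U (introT andP (conj (subxx U) hU)).

Lemma upper_self_sub (X : Upper) : uset upper_self \subset uset X.
Proof. exact: upper_sub. Qed.

End SelfIndexed.

(* When |U| = J - 1, Upper(U) consists of the proper sets containing U and at
   least one further point; it is generated by the one-point extensions
   x + U, any two of which lie below x + y + U. *)
Section NewSet.
Hypotheses (cardU : #|U|.+1 = J) (hn3 : #|U| + 3 <= n).

Lemma above_of_new_point (x : 'I_n) (X : {set 'I_n}) :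
  x \notin U -> x \in X -> U \subset X -> #|X| < n -> above X.
Proof.
move=> hx xX UX Xn; rewrite /above /Bpred UX proper_of_card //= -cardU.
have := cardsU1 x U; rewrite hx /= add1n => <-.
by apply: subset_leq_card; rewrite subUset sub1set xX UX.
Qed.

Definition ext1 (x : 'I_n) (hx : x \notin U) : Upper.
Proof.
refine (exist _ (x |: U) _); apply: (above_of_new_point hx); rewrite ?setU11 ?subsetUr //.
by rewrite cardsU1 hx; lia.
Defined.

Definition ext2 (x y : 'I_n) (hx : x \notin U) : Upper.
Proof.
refine (exist _ (x |: (y |: U)) _); apply: (above_of_new_point hx); rewrite ?setU11 //.
- by apply: subset_trans (subsetUr _ _); apply: subsetUr.
- by rewrite !cardsU1; move: (x \notin _) (y \notin _) => [] [] /=; set c := #|U|; lia.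
Defined.

Lemma sub_ext12_left x y (hx : x \notin U) : uset (ext1 hx) \subset uset (ext2 y hx).
Proof. by rewrite /= setUS // subsetUr. Qed.

Lemma sub_ext12_right x y (hx : x \notin U) (hy : y \notin U) :
  uset (ext1 hy) \subset uset (ext2 y hx).
Proof. exact: subsetUr. Qed.

Lemma ext1_sub x (hx : x \notin U) (X : Upper) : x \in uset X -> uset (ext1 hx) \subset uset X.
Proof. by move=> xX; rewrite /= subUset sub1set xX upper_sub. Qed.

Lemma exists_outside : exists x : 'I_n, x \notin U.
Proof.
have : U \proper [set: 'I_n] by apply: proper_of_card; lia.
by case/properP => _ [x _ hx]; exists x.
Qed.

Definition x0 : 'I_n := proj1_sig (sigW exists_outside).

Lemma x0_notin : x0 \notin U.
Proof. exact: (proj2_sig (sigW exists_outside)). Qed.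

Definition new_point (X : Upper) : 'I_n := odflt x0 [pick y in uset X :\: U].

Lemma new_point_in (X : Upper) : new_point X \in uset X :\: U.
Proof.
rewrite /new_point; case: pickP => [y -> //|none] /=; exfalso.
have : uset X \subset U.
  by apply/subsetP => y yX; apply/negPn/negP => yU; have := none y; rewrite inE yU yX.
by move/subset_leq_card; have := upper_B X; rewrite /Bpred => /andP [_]; lia.
Qed.

Lemma new_point_notin (X : Upper) : new_point X \notin U.
Proof. by have := new_point_in X; rewrite inE => /andP []. Qed.

Lemma new_point_mem (X : Upper) : new_point X \in uset X.
Proof. by have := new_point_in X; rewrite inE => /andP []. Qed.

(* Upper(U) is connected: a quantity that is monotone along inclusions is constant. *)
Lemma upper_constant (T : Type) (q : Upper -> T) :
  (forall X Y : Upper, uset X \subset uset Y -> q X = q Y) -> forall X Y, q X = q Y.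
Proof.
move=> q_mono X Y; set x := new_point_notin X; set y := new_point_notin Y.
rewrite -(q_mono _ _ (ext1_sub x (new_point_mem X))) -(q_mono _ _ (ext1_sub y (new_point_mem Y))).
by rewrite (q_mono _ _ (sub_ext12_left (new_point Y) x)) -(q_mono _ _ (sub_ext12_right x y)).
Qed.

Definition swap_iso (x y : 'I_n) (hx : x \notin U) (hy : y \notin U) :
  chom (upper_obj (ext1 hy)) (upper_obj (ext1 hx)) :=
  ccomp (upper_map (sub_ext12_left y hx)) (gpd_inv (upper_map (sub_ext12_right hx hy))).

Lemma swap_iso_via x y hx hy (X : Upper) (hxX : x \in uset X) (hyX : y \in uset X) :
  swap_iso hx hy = ccomp (upper_map (ext1_sub hx hxX)) (gpd_inv (upper_map (ext1_sub hy hyX))).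
Proof.
have h2 : uset (ext2 y hx) \subset uset X by rewrite /= !subUset !sub1set hxX hyX upper_sub.
rewrite /swap_iso -(upper_map_comp (sub_ext12_left y hx) h2 (ext1_sub hx hxX))
        -(upper_map_comp (sub_ext12_right hx hy) h2 (ext1_sub hy hyX)).
by rewrite gpd_inv_comp -!ccompA (ccompA (upper_map h2)) gpd_invR ccomp1l.
Qed.

Lemma swap_iso_refl x (hx : x \notin U) : swap_iso hx hx = cid _.
Proof.
by rewrite /swap_iso (upper_map_irr (sub_ext12_right hx hx) (sub_ext12_left x hx)) gpd_invR.
Qed.

(* The cocycle identity: x + y + z + U is still proper when |U| + 4 <= n. *)
Lemma swap_iso_cocycle (hn4 : #|U| + 4 <= n) x y z hx hy hz :
  ccomp (@swap_iso x y hx hy) (@swap_iso y z hy hz) = swap_iso hx hz.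
Proof.
have aboveQ : above (x |: (y |: (z |: U))).
  apply: (above_of_new_point hx); rewrite ?setU11 //.
  - by do 3 apply: subset_trans (subsetUr _ _).
  - rewrite !cardsU1; move: (x \notin _) (y \notin _) (z \notin _) => [] [] [] /=;
    by set c := #|U|; lia.
pose Q : Upper := exist above _ aboveQ.
have xQ : x \in uset Q by rewrite /= setU11.
have yQ : y \in uset Q by rewrite /= setU1r // setU11.
have zQ : z \in uset Q by rewrite /= setU1r // setU1r // setU11.
rewrite (swap_iso_via hx hy xQ yQ) (swap_iso_via hy hz yQ zQ) (swap_iso_via hx hz xQ zQ).
by rewrite -!ccompA (ccompA (gpd_inv _)) gpd_invL ccomp1l.
Qed.

Definition transport (X : Upper) : chom (upper_obj X) (upper_obj (ext1 x0_notin)) :=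
  ccomp (swap_iso x0_notin (new_point_notin X))
        (upper_map (ext1_sub (new_point_notin X) (new_point_mem X))).

Section Coherence.
Hypothesis hn4 : #|U| + 4 <= n.

Lemma transport_indep y z (hy : y \notin U) (hz : z \notin U) (X : Upper)
  (hyX : y \in uset X) (hzX : z \in uset X) :
  ccomp (swap_iso x0_notin hy) (upper_map (ext1_sub hy hyX)) =
  ccomp (swap_iso x0_notin hz) (upper_map (ext1_sub hz hzX)).
Proof.
rewrite -(swap_iso_cocycle hn4 x0_notin hy hz) (swap_iso_via hy hz hyX hzX).
by rewrite -!ccompA gpd_invL ccomp1r.
Qed.

Lemma transport_compat (X Y : Upper) (h : uset X \subset uset Y) :
  ccomp (transport X) (upper_map h) = transport Y.
Proof.
have yY : new_point X \in uset Y by apply: (subsetP h); exact: new_point_mem.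
rewrite /transport -ccompA (upper_map_comp _ _ (ext1_sub (new_point_notin X) yY)).
exact: transport_indep.
Qed.

Lemma transport_base : transport (ext1 x0_notin) = cid _.
Proof.
have x0_in : x0 \in uset (ext1 x0_notin) by rewrite /= setU11.
rewrite /transport (transport_indep (new_point_notin _) x0_notin (new_point_mem _) x0_in).
by rewrite swap_iso_refl ccomp1l; exact: upper_map_id.
Qed.

End Coherence.
End NewSet.
End UpperDiagram.

Section UpperRestriction.
Variables (n : nat) (Phi : PFun n) (J : nat) (B : lim J Phi).

Definition upper_restrict (U V : {set 'I_n}) (hUV : U \subset V) (X : Upper J V) : Upper J U.
Proof.
refine (exist _ (uset X) _); apply/andP; split; last exact: upper_B.
exact: subset_trans hUV (upper_sub X).
Defined.

Lemma upper_restrictE (U V : {set 'I_n}) (hUV : U \subset V) (X : Upper J V) :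
  pres Phi hUV (upper_obj B X) = upper_obj B (upper_restrict hUV X).
Proof.
rewrite /upper_obj (pres_comp_obj hUV (upper_sub X) (upper_sub (upper_restrict hUV X))
                                  (Bpred_proper (upper_B X))).
by congr (pres _ _ _); apply: la_irr.
Qed.

Lemma pres_upper_map (U V : {set 'I_n}) (hUV : U \subset V) (X Y : Upper J V)
  (h : uset X \subset uset Y) :
  ccomp (eq_hom (upper_restrictE hUV X)) (fmap (pres Phi hUV) (upper_map B h)) =
  ccomp (@upper_map n Phi J B U (upper_restrict hUV X) (upper_restrict hUV Y) h)
        (eq_hom (upper_restrictE hUV Y)).
Proof.
rewrite /upper_map !unlock /upper_map_def; simpl_comp.
rewrite (pres_comp_hom hUV (upper_sub X) (upper_sub (upper_restrict hUV X))
                       (Bpred_proper (upper_B X))) hcast_eq_hom; simpl_comp.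
rewrite (lal_irr B (upper_B X) (upper_B (upper_restrict hUV X))
                   (upper_B Y) (upper_B (upper_restrict hUV Y))); simpl_comp.
by close_eq_hom.
Qed.

Lemma pres_upper_map_conj (U V : {set 'I_n}) (hUV : U \subset V) (X Y : Upper J V)
  (h : uset X \subset uset Y)
  (h' : uset (upper_restrict hUV X) \subset uset (upper_restrict hUV Y)) :
  upper_map B h' =
  ccomp (eq_hom (upper_restrictE hUV X))
        (ccomp (fmap (pres Phi hUV) (upper_map B h)) (eq_hom (esym (upper_restrictE hUV Y)))).
Proof.
rewrite ccompA pres_upper_map -ccompA eq_hom_trans eq_hom_refl ccomp1r.
exact: upper_map_irr.
Qed.

End UpperRestriction.

Section NewSets.
Variables (n : nat) (j : nat).

Lemma card_of_new (U : {set 'I_n}) : Bpred j U -> ~~ Bpred j.+1 U -> #|U|.+1 = j.+1.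
Proof.
rewrite /Bpred => /andP [pU c1]; rewrite pU /= -ltnNge ltnS => c2.
by apply/eqP; rewrite eqSS eqn_leq c1 c2.
Qed.

Lemma new_sub_eq (U V : {set 'I_n}) : Bpred j U -> Bpred j V -> ~~ Bpred j.+1 V ->
  U \subset V -> U = V.
Proof.
move=> pU pV nV hUV; apply/eqP; rewrite eqEcard hUV /=.
by move/eqP: (card_of_new pV nV); rewrite eqSS => /eqP ->; case/andP: pU.
Qed.

Lemma exists_extension (U : {set 'I_n}) : Bpred j U -> ~~ Bpred j.+1 U -> j.+2 <= n ->
  exists2 x, x \notin U & Bpred j.+1 (x |: U).
Proof.
move=> pU nU hn; have cU := card_of_new pU nU.
have [x _ hx] : exists2 x, x \in [set: 'I_n] & x \notin U.
  by apply/(properP (Bpred_proper pU)).2.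
exists x => //; rewrite /Bpred proper_of_card /= cardsU1 hx /=;
  by move: cU hn; set c := #|U|; lia.
Qed.

End NewSets.

Section RestrictionProperties.
Variables (n : nat) (Phi : PFun n) (j : nat).

(* Faithfulness: a component at a set U of size j is determined, through the
   isomorphism alpha_{U, x+U}, by the component at a one-point extension. *)
Lemma restr_faithful : j.+2 <= n -> faithful (restr Phi j).
Proof.
move=> hn A B f g E; apply: LHom_eq => U pU.
have E_at V (pV : Bpred j.+1 V) : lg f (Bpred_succ pV) = lg g (Bpred_succ pV).
  exact: (f_equal (fun h : chom (restr Phi j A) (restr Phi j B) => lg h pV) E).
case: (boolP (Bpred j.+1 U)) => [pU1|nU].
  by rewrite (eq_irrelevance pU (Bpred_succ pU1)) E_at.
have [x hx pV] := exists_extension pU nU hn.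
have hUV : U \subset x |: U by apply: subsetUr.
apply: (@iso_cancelr _ _ _ _ (lal A pU (Bpred_succ pV) hUV)); first exact: gisoP.
by rewrite (lgP f) (lgP g) E_at.
Qed.

(* Fullness: given h : restr A -> restr B, the component at U is obtained by
   conjugating h at any X in Upper(U); connectedness of Upper(U) makes the
   choice irrelevant. *)
Section Fullness.
Variables (A B : lim j Phi) (h : chom (restr Phi j A) (restr Phi j B)).

Definition extends U (pU : Bpred j U) (c : chom (la A pU) (la B pU)) : Prop :=
  forall V (pV : Bpred j.+1 V) (hUV : U \subset V),
    ccomp c (lal A pU (Bpred_succ pV) hUV) =
    ccomp (lal B pU (Bpred_succ pV) hUV) (fmap (pres Phi hUV) (lg h pV)).

Lemma lal_upper_map (C : lim j Phi) U (pU : Bpred j U) (X Y : Upper j.+1 U)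
  (hXY : uset X \subset uset Y) :
  ccomp (lal C pU (Bpred_succ (upper_B X)) (upper_sub X)) (upper_map (restr Phi j C) hXY) =
  lal C pU (Bpred_succ (upper_B Y)) (upper_sub Y).
Proof.
rewrite /upper_map unlock /upper_map_def.
rewrite (lal_comp C pU (Bpred_succ (upper_B X)) (Bpred_succ (upper_B Y))
                  (upper_sub X) hXY (upper_sub Y)) hcast_eq_hom.
by simpl_comp; close_eq_hom.
Qed.

Lemma restr_hom_upper_nat U (X Y : Upper j.+1 U) (hXY : uset X \subset uset Y) :
  ccomp (fmap (pres Phi (upper_sub X)) (lg h (upper_B X))) (upper_map (restr Phi j A) hXY) =
  ccomp (upper_map (restr Phi j B) hXY) (fmap (pres Phi (upper_sub Y)) (lg h (upper_B Y))).
Proof.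
rewrite /upper_map !unlock /upper_map_def ccompA -fmap_comp (lgP h) fmap_comp.
rewrite (pres_comp_hom (upper_sub X) hXY (upper_sub Y) (Bpred_proper (upper_B Y)))
        hcast_eq_hom; simpl_comp.
by close_eq_hom.
Qed.

Lemma exists_extends (hn : j.+3 <= n) U (pU : Bpred j U) : exists c, @extends U pU c.
Proof.
case: (boolP (Bpred j.+1 U)) => [pU1|nU].
  rewrite (eq_irrelevance pU (Bpred_succ pU1)); exists (lg h pU1) => V pV hUV.
  exact: (lgP h pU1 pV hUV).
have cU := card_of_new pU nU; have hn3 : #|U| + 3 <= n by move: cU hn; set c := #|U|; lia.
pose q (X : Upper j.+1 U) : chom (la A pU) (la B pU) :=
  ccomp (lal B pU (Bpred_succ (upper_B X)) (upper_sub X))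
   (ccomp (fmap (pres Phi (upper_sub X)) (lg h (upper_B X)))
          (gpd_inv (lal A pU (Bpred_succ (upper_B X)) (upper_sub X)))).
have q_mono (X Y : Upper j.+1 U) : uset X \subset uset Y -> q X = q Y.
  move=> hXY; rewrite /q -(lal_upper_map A pU hXY) -(lal_upper_map B pU hXY) gpd_inv_comp.
  rewrite -!ccompA (ccompA (upper_map (restr Phi j B) hXY)) -(restr_hom_upper_nat hXY).
  by rewrite -!ccompA (ccompA (upper_map (restr Phi j A) hXY)) gpd_invR ccomp1l.
have [x hx pV] := exists_extension pU nU (ltnW hn).
have aboveV : above j.+1 U (x |: U) by rewrite /above subsetUr pV.
exists (q (exist (above j.+1 U) _ aboveV)) => V pV' hUV.
have aboveV' : above j.+1 U V by rewrite /above hUV pV'.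
pose XV : Upper j.+1 U := exist (above j.+1 U) _ aboveV'.
rewrite (upper_constant cU hn3 q_mono _ XV) /q.
rewrite (eq_irrelevance pV' (upper_B XV)) (eq_irrelevance hUV (upper_sub XV)).
by rewrite -!ccompA gpd_invL ccomp1r.
Qed.

Lemma extends_unique U (pU1 : Bpred j.+1 U)
  (c : chom (la A (Bpred_succ pU1)) (la B (Bpred_succ pU1))) :
  extends c -> c = lg h pU1.
Proof.
move=> ext_c; apply: (@iso_cancelr _ _ _ _ (lal A (Bpred_succ pU1) (Bpred_succ pU1) (subxx U))).
  exact: gisoP.
by rewrite (ext_c U pU1 (subxx U)) nat_at_refl.
Qed.

Hypothesis hn : j.+3 <= n.

Definition ext_comp U (pU : Bpred j U) : chom (la A pU) (la B pU) :=
  proj1_sig (constructive_indefinite_description _ (exists_extends hn pU)).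

Lemma ext_compP U (pU : Bpred j U) : extends (ext_comp pU).
Proof. exact: (proj2_sig (constructive_indefinite_description _ (exists_extends hn pU))). Qed.

Definition ext_hom : chom A B.
Proof.
refine {| lg := ext_comp |}.
move=> U V pU pV hUV.
case: (boolP (Bpred j.+1 V)) => [pV1|nV].
  rewrite (eq_irrelevance pV (Bpred_succ pV1)) (extends_unique (ext_compP (Bpred_succ pV1))).
  exact: ext_compP.
have E := new_sub_eq pU pV nV hUV; subst V.
by rewrite (eq_irrelevance pV pU) nat_at_refl.
Defined.

Lemma ext_hom_restr : fmap (restr Phi j) ext_hom = h.
Proof. by apply: LHom_eq => U pU1 /=; exact: extends_unique (ext_compP _). Qed.

End Fullness.

Lemma restr_full : j.+3 <= n -> full (restr Phi j).
Proof. by move=> hn A B h; exists (ext_hom h hn); exact: ext_hom_restr. Qed.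

End RestrictionProperties.

(* At every U in B([n],j) the diagram induced by B over Upper(U) admits a
   coherent trivialization (base point and transports), and lift_obj takes the
   value at the base point. *)
Section EssentialSurjectivity.
Variables (n : nat) (Phi : PFun n) (j : nat) (B : lim j.+1 Phi).
Hypothesis hn : j.+4 <= n.

Lemma exists_trivialization U (pU : Bpred j U) :
  exists c : Upper j.+1 U,
  exists t : (forall X : Upper j.+1 U, chom (upper_obj B X) (upper_obj B c)),
  (forall (X Y : Upper j.+1 U) (h : uset X \subset uset Y),
     ccomp (t X) (upper_map B h) = t Y) /\ t c = cid _.
Proof.
case: (boolP (Bpred j.+1 U)) => [pU1|nU].
  exists (upper_self pU1), (fun X => upper_map B (upper_self_sub pU1 X)).
  by split=> [X Y h|]; [exact: upper_map_comp|exact: upper_map_id].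
have cU := card_of_new pU nU.
have hn3 : #|U| + 3 <= n by move: cU hn; set c := #|U|; lia.
have hn4 : #|U| + 4 <= n by move: cU hn; set c := #|U|; lia.
exists (ext1 cU hn3 (x0_notin cU hn3)), (transport B cU hn3).
by split=> [X Y h|]; [exact: transport_compat|exact: transport_base].
Qed.

Definition triv_sig U (pU : Bpred j U) :=
  constructive_indefinite_description _ (exists_trivialization pU).

Definition base U (pU : Bpred j U) : Upper j.+1 U := proj1_sig (triv_sig pU).

Definition triv_maps_sig U (pU : Bpred j U) :=
  constructive_indefinite_description _ (proj2_sig (triv_sig pU)).

Definition triv U (pU : Bpred j U) :
  forall X : Upper j.+1 U, chom (upper_obj B X) (upper_obj B (base pU)) :=
  proj1_sig (triv_maps_sig pU).

Lemma triv_compat U (pU : Bpred j U) (X Y : Upper j.+1 U) (h : uset X \subset uset Y) :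
  ccomp (triv pU X) (upper_map B h) = triv pU Y.
Proof. exact: (proj1 (proj2_sig (triv_maps_sig pU))). Qed.

Lemma triv_base U (pU : Bpred j U) : triv pU (base pU) = cid _.
Proof. exact: (proj2 (proj2_sig (triv_maps_sig pU))). Qed.

Lemma triv_congr U (pU : Bpred j U) (X Y : Upper j.+1 U) (e : X = Y) :
  triv pU X = ccomp (triv pU Y) (eq_hom (f_equal (@upper_obj n Phi j.+1 B U) e)).
Proof. by subst Y; rewrite ccomp1r. Qed.

Lemma triv_restrict_self U V (pU : Bpred j U) (pV : Bpred j V) (pV1 : Bpred j.+1 V)
  (hUV : U \subset V) :
  ccomp (triv pU (upper_restrict hUV (base pV))) (eq_hom (upper_restrictE B hUV (base pV))) =
  ccomp (triv pU (upper_restrict hUV (upper_self pV1)))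
    (ccomp (eq_hom (upper_restrictE B hUV (upper_self pV1)))
           (fmap (pres Phi hUV) (gpd_inv (triv pV (upper_self pV1))))).
Proof.
have hs : uset (upper_restrict hUV (upper_self pV1)) \subset uset (upper_restrict hUV (base pV)).
  exact: (upper_self_sub pV1 (base pV)).
have triv_self_inv :
  ccomp (upper_map B (upper_self_sub pV1 (base pV))) (triv pV (upper_self pV1)) = cid _.
  apply: (@iso_cancell _ _ _ _ (triv pV (upper_self pV1))); first exact: gisoP.
  by rewrite ccompA triv_compat triv_base ccomp1l ccomp1r.
apply: (@iso_cancelr _ _ _ _ (fmap (pres Phi hUV) (triv pV (upper_self pV1)))).
  by apply: fmap_iso; apply: gisoP.
rewrite -!ccompA -fmap_comp gpd_invL fmap_id ccomp1r.
rewrite -(triv_compat pU hs) (pres_upper_map_conj B (upper_self_sub pV1 (base pV))); simpl_comp.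
by rewrite eq_hom_refl ccomp1l -fmap_comp triv_self_inv fmap_id ccomp1r.
Qed.

Lemma triv_restrict U V (pU : Bpred j U) (pV : Bpred j V) (hUV : U \subset V)
  (X : Upper j.+1 V) :
  ccomp (triv pU (upper_restrict hUV (base pV)))
    (ccomp (eq_hom (upper_restrictE B hUV (base pV))) (fmap (pres Phi hUV) (triv pV X))) =
  ccomp (triv pU (upper_restrict hUV X)) (eq_hom (upper_restrictE B hUV X)).
Proof.
case: (boolP (Bpred j.+1 V)) => [pV1|nV].
  rewrite ccompA triv_restrict_self -!ccompA -fmap_comp.
  have -> : ccomp (gpd_inv (triv pV (upper_self pV1))) (triv pV X) =
            upper_map B (upper_self_sub pV1 X).
    by rewrite -(triv_compat pV (upper_self_sub pV1 X)) ccompA gpd_invL ccomp1l.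
  by rewrite pres_upper_map ccompA triv_compat.
have E := new_sub_eq pU pV nV hUV; subst V.
rewrite (eq_irrelevance pV pU) (pres_idE hUV (Bpred_proper pU)).
have e1 : upper_restrict hUV (base pU) = base pU by apply: Upper_eq.
have e2 : upper_restrict hUV X = X by apply: Upper_eq.
by rewrite (triv_congr pU e1) (triv_congr pU e2) triv_base; simpl_comp; close_eq_hom.
Qed.

Definition lift_obj : lim j Phi.
Proof.
refine {| la := fun U (pU : Bpred j U) => upper_obj B (base pU);
          lal := fun U V (pU : Bpred j U) (pV : Bpred j V) (hUV : U \subset V) =>
            ccomp (triv pU (upper_restrict hUV (base pV)))
                  (eq_hom (upper_restrictE B hUV (base pV))) |}.
- move=> U pU h.
  have e1 : upper_restrict h (base pU) = base pU by apply: Upper_eq.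
  by rewrite hcast_eq_hom (triv_congr pU e1) triv_base; simpl_comp; close_eq_hom.
- move=> U V W pU pV pW hUV hVW hUW.
  rewrite hcast_eq_hom; simpl_comp.
  rewrite (ccompA (eq_hom _)) ccompA triv_restrict -ccompA.
  have e1 : upper_restrict hUV (upper_restrict hVW (base pW)) = upper_restrict hUW (base pW).
    exact: Upper_eq.
  by rewrite (triv_congr pU e1); simpl_comp; close_eq_hom.
Defined.

Lemma upper_obj_self U (pU1 : Bpred j.+1 U) : upper_obj B (upper_self pU1) = la B pU1.
Proof.
rewrite /upper_obj (pres_id_obj (upper_sub (upper_self pU1))
                                (Bpred_proper (upper_B (upper_self pU1)))).
exact: la_irr.
Qed.

Definition lift_counit : chom (restr Phi j lift_obj) B.
Proof.
refine {| lg := fun U (pU1 : Bpred j.+1 U) =>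
   (ccomp (eq_hom (upper_obj_self pU1)) (gpd_inv (triv (Bpred_succ pU1) (upper_self pU1)))
    : chom (la (restr Phi j lift_obj) pU1) (la B pU1)) |}.
move=> U V pU1 pV1 h /=.
rewrite -!ccompA (triv_restrict_self (Bpred_succ pU1) (Bpred_succ pV1) pV1 h).
rewrite !ccompA -(ccompA (eq_hom _)).
have hs : uset (upper_self pU1) \subset uset (upper_restrict h (upper_self pV1)) by exact: h.
have -> : ccomp (gpd_inv (triv (Bpred_succ pU1) (upper_self pU1)))
                (triv (Bpred_succ pU1) (upper_restrict h (upper_self pV1))) = upper_map B hs.
  by rewrite -(triv_compat (Bpred_succ pU1) hs) ccompA gpd_invL ccomp1l.
rewrite /upper_map unlock /upper_map_def (pres_idE _ (Bpred_proper pU1)).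
rewrite (lal_irr B pU1 (upper_B (upper_self pU1))
                   pV1 (upper_B (upper_restrict h (upper_self pV1)))).
by rewrite (eq_irrelevance hs h); simpl_comp; close_eq_hom.
Qed.

End EssentialSurjectivity.

Lemma restr_ess_surj n (Phi : PFun n) j : j.+4 <= n -> ess_surj (restr Phi j).
Proof. by move=> hn B; exists (lift_obj B hn), (lift_counit B hn); exact: lim_iso. Qed.

Lemma gamma_props n (Phi : PFun n) k : k < n ->
  [/\ faithful (gamma k Phi), k.+2 <= n -> full (gamma k Phi)
    & k.+3 <= n -> ess_surj (gamma k Phi)].
Proof.
elim: k => [|k IH] hk.
  have [id_faithful id_full id_ess_surj] := id_functor_props (lim 0 Phi).
  split=> [|_|_]; [exact: nat_iso_faithful (gamma0_iso_id Phi) id_faithful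
                  |exact: nat_iso_full (gamma0_iso_id Phi) id_full
                  |exact: nat_iso_ess_surj (gamma0_iso_id Phi) id_ess_surj].
have [IH_faithful IH_full IH_ess_surj] := IH (ltnW hk).
split=> [|hk'|hk'].
- apply: nat_iso_faithful (gamma_succ_iso Phi k) _.
  exact: faithful_comp IH_faithful (@restr_faithful n Phi k hk).
- apply: nat_iso_full (gamma_succ_iso Phi k) _.
  exact: full_comp (IH_full (ltnW hk')) (@restr_full n Phi k hk').
- apply: nat_iso_ess_surj (gamma_succ_iso Phi k) _.
  exact: ess_surj_comp (IH_ess_surj (ltnW hk')) (@restr_ess_surj n Phi k hk').
Qed.

Theorem proposition5p1 (n k : nat) (Phi : PFun n) :
  k < n ->
  faithful (gamma k Phi) /\
  (k + 2 <= n -> full (gamma k Phi) /\ faithful (gamma k Phi)) /\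
  (k + 3 <= n -> equivalence (gamma k Phi)).
Proof.
move=> hk; have [gamma_faithful gamma_full gamma_ess_surj] := gamma_props Phi hk.
split=> //; split=> [hk2|hk3].
  by split=> //; apply: gamma_full; lia.
by apply: fully_faithful_ess_surj_equiv => //; [apply: gamma_full|apply: gamma_ess_surj]; lia.
Qed.
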